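(* Let $n\ge 2$ be an integer and let $n_0,n_1$ be integers with $n=n_0+n_1$. The following are equivalent: (1) $(n_0,n_1)$ is a hypercubic bipartition (HCBP) of $n$; (2) $f(n)=n_1+f(n_1)+f(n_0)$ and $n_0\ge n_1\ge 1$; (3) $(n_0,n_1)=\left(\frac{n+d_i(n)}{2},\frac{n-d_i(n)}{2}\right)$ for some $i\in\{1,\dots,\lceil\log_2 n\rceil\}$.
   Context: Let $f:\mathbb{N}\to\mathbb{N}_0$ be defined by $f(1)=0$ and $f(n)=\lfloor n/2\rfloor+f(\lfloor n/2\rfloor)+f(\lceil n/2\rceil)$ for $n>1$. For $i\in\mathbb{N}$ and $n\in\mathbb{N}_0$ let $d_i(n)=2^{i-1}-\left|(n\bmod 2^i)-2^{i-1}\right|$. For $k\ge 0$ and $0\le m<2^k$, let $\beta_k(m)\in\{0,1\}^k$ be the point whose $j$-th coordinate is the binary digit of $m$ of weight $2^{k-j}$. For $n\ge 2$ put $k=\lceil\log_2 n\rceil$. A pair $(n_0,n_1)$ of integers with $n=n_0+n_1$ and $n_0\ge n_1\ge 1$ is a hypercubic bipartition (HCBP) of $n$ if there is $i\in\{1,\dots,k\}$ such that the hyperplane $x_i=1/2$ splits the $n$ points $\beta_k(0),\dots,\beta_k(n-1)$ into $n_0$ points on one side and $n_1$ on the other. *)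

From mathcomp Require Import all_boot.
Set Implicit Arguments. Unset Strict Implicit. Unset Printing Implicit Defensive.

(* f(1) = 0, f(n) = floor(n/2) + f(floor(n/2)) + f(ceil(n/2)) for n > 1.
   Defined with fuel; fuel n suffices since ceil(n/2) < n for n >= 2.
   (f 0 = 0 is an arbitrary value outside the paper's domain.) *)
Fixpoint f_aux (fuel n : nat) : nat :=
  match fuel with
  | 0 => 0
  | k.+1 => if n <= 1 then 0
            else n./2 + f_aux k n./2 + f_aux k (uphalf n)
  end.
Definition f (n : nat) : nat := f_aux n n.

Definition distn (a b : nat) : nat := (a - b) + (b - a).

Definition d (i n : nat) : nat :=
  2 ^ i.-1 - distn (n %% 2 ^ i) (2 ^ i.-1).

(* j-th coordinate (1 <= j <= k) of beta_k(m): binary digit of m of weight 2^(k-j) *)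
Definition beta (k m j : nat) : bool := odd (m %/ 2 ^ (k - j)).

Definition clog2 (n : nat) : nat := up_log 2 n.

Definition side (n i : nat) (b : bool) : nat :=
  count (fun m => beta (clog2 n) m i == b) (iota 0 n).

Definition HCBP (n n0 n1 : nat) : Prop :=
  n = n0 + n1 /\ n1 <= n0 /\ 1 <= n1 /\
  exists i, 1 <= i <= clog2 n /\
    ((side n i false = n0 /\ side n i true = n1) \/
     (side n i true = n0 /\ side n i false = n1)).

(* f(n) is the largest value of f(a) + f(b) + min(a, b) over the splittings
   n = a + b, attained exactly when the splitting is dyadically balanced: some
   2^j divides a or b and |a - b| <= 2^j.  Both facts are proved together by
   induction, reducing a splitting of n to one or two splittings of about n/2
   according to the parities of a and b.  As d_i(n) is the distance from n to
   the nearest multiple of 2^i, the balanced splittings are those with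
   |a - b| = d_i(n) for some i <= ceil(log2 n).  On the other side, x_i = 1/2
   separates 0, ..., n-1 by their binary digit of weight 2^(k-i), and there are
   (n - d_(k-i+1)(n))/2 ones among these digits. *)

From mathcomp Require Import all_boot zify.
Set Implicit Arguments. Unset Strict Implicit. Unset Printing Implicit Defensive.

Lemma f_aux_fuel fuel1 fuel2 n :
  n <= fuel1 -> n <= fuel2 -> f_aux fuel1 n = f_aux fuel2 n.
Proof.
elim: fuel1 fuel2 n => [|k IH] [|k'] n //= le_n1 le_n2.
- by have -> : n = 0 by lia.
- by have -> : n = 0 by lia.
- case: ifP => // n_gt1; congr (_ + _ + _); apply: IH; lia.
Qed.

Lemma fE n : 2 <= n -> f n = n./2 + f n./2 + f (uphalf n).
Proof.
case: n => [|n] // n_ge2; rewrite {1}/f /= ifN; last by rewrite -ltnNge.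
by congr (_ + _ + _); apply: f_aux_fuel; lia.
Qed.

Lemma f_double x : f (2 * x) = 2 * f x + x.
Proof.
case: x => [|x] //; rewrite fE; last by lia.
have -> : (2 * x.+1)./2 = x.+1 by lia.
have -> : uphalf (2 * x.+1) = x.+1 by lia.
lia.
Qed.

Lemma f_double_add1 x : f (2 * x + 1) = f x + f (x + 1) + x.
Proof.
case: x => [|x] //; rewrite fE; last by lia.
have -> : (2 * x.+1 + 1)./2 = x.+1 by lia.
have -> : uphalf (2 * x.+1 + 1) = x.+1 + 1 by lia.
lia.
Qed.

Definition dyadic_balanced a b :=
  exists j, (2 ^ j %| a \/ 2 ^ j %| b) /\ a <= b + 2 ^ j /\ b <= a + 2 ^ j.

Lemma dyadic_balancedC a b : dyadic_balanced a b -> dyadic_balanced b a.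
Proof. by case=> j [dvd_ab [le_ab le_ba]]; exists j; split; [tauto|lia]. Qed.

Lemma dyadic_balanced_near a b :
  a <= b + 1 -> b <= a + 1 -> dyadic_balanced a b.
Proof. by move=> le_ab le_ba; exists 0; rewrite expn0 dvd1n; split; [left|lia]. Qed.

Lemma dyadic_balanced0l b : dyadic_balanced 0 b.
Proof. by exists b; rewrite dvdn0; split; [left | have := ltn_expl b (ltnSn 1); lia]. Qed.

Lemma pow2_dvd_odd j m : 2 ^ j %| m -> odd m -> 2 ^ j = 1.
Proof.
case: j => // j /(dvdn_trans _) dvd2m odd_m.
have : 2 %| m by apply: dvd2m; rewrite expnS dvdn_mulr.
by rewrite dvdn2 odd_m.
Qed.

Lemma dyadic_balanced_double x y :
  dyadic_balanced (2 * x) (2 * y) <-> dyadic_balanced x y.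
Proof.
split=> [[[|j] [dvd_xy le_xy]]|[j [dvd_xy le_xy]]].
- by apply: dyadic_balanced_near; rewrite expn0 in le_xy; lia.
- by exists j; rewrite expnS !dvdn_pmul2l // in dvd_xy le_xy; split; [|lia].
- by exists j.+1; rewrite !expnS !dvdn_pmul2l //; split; [|lia].
Qed.

Lemma dyadic_balanced_odd_odd x y :
  dyadic_balanced (2 * x + 1) (2 * y + 1) <-> x = y.
Proof.
split=> [[j [dvd_xy le_xy]] | ->]; last by apply: dyadic_balanced_near; lia.
have pow2_1 : 2 ^ j = 1 by case: dvd_xy => /pow2_dvd_odd; apply; lia.
lia.
Qed.

Lemma dyadic_balanced_odd_even x y :
  dyadic_balanced (2 * x + 1) (2 * y) <->
  dyadic_balanced x y /\ dyadic_balanced (x + 1) y.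
Proof.
split=> [[[|j] [dvd_xy le_xy]] | [[j1 [dvd1 le1]] [j2 [dvd2 le2]]]].
- by rewrite expn0 in le_xy; split; apply: dyadic_balanced_near; lia.
- case: dvd_xy => [/pow2_dvd_odd|]; first by rewrite expnS; lia.
  rewrite expnS dvdn_pmul2l // => dvd_y; rewrite expnS in le_xy.
  by split; exists j; (split; [right|lia]).
have witness k : 2 ^ k %| y -> x + 1 <= y + 2 ^ k -> y <= x + 2 ^ k ->
    dyadic_balanced (2 * x + 1) (2 * y).
  by move=> dvd_y le_xy le_yx; exists k.+1; rewrite expnS dvdn_pmul2l //; split; [right|lia].
have witness1 : ~~ odd y -> x + 1 <= y + 2 -> y <= x + 2 ->
    dyadic_balanced (2 * x + 1) (2 * y).
  by move=> even_y; apply: (witness 1); rewrite expn1 ?dvdn2.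
have [y_near|[y_gt|y_lt]] : x <= y <= x + 1 \/ x + 2 <= y \/ y + 1 <= x by lia.
- by apply: dyadic_balanced_near; lia.
- case: dvd1 => [dvd1|dvd1]; last by apply: (witness j1); lia.
  have even_x : ~~ odd x by apply/negP => /(pow2_dvd_odd dvd1); lia.
  have [pow2_j2|[]] : 2 ^ j2 = 1 \/ (2 ^ j2 %| y /\ y <= x + 2 ^ j2).
    case: dvd2 => [dvd2|dvd2]; first by left; apply: pow2_dvd_odd dvd2 _; lia.
    case: (leqP y (x + 2 ^ j2)) => [|lt_xy]; first by right.
    left; apply: (pow2_dvd_odd (m := x + 1)); last by lia.
    have -> : x + 1 = y - 2 ^ j2 by lia.
    by rewrite dvdn_sub.
  + by apply: witness1; lia.
  + by move=> dvd_y le_yx; apply: (witness j2) => //; lia.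
- case: dvd2 => [dvd2|dvd2]; last by apply: (witness j2); lia.
  have odd_x : odd x by apply/negPn/negP => even_x; have := pow2_dvd_odd dvd2; lia.
  have [pow2_j1|[]] : 2 ^ j1 = 1 \/ (2 ^ j1 %| y /\ x + 1 <= y + 2 ^ j1).
    case: dvd1 => [dvd1|dvd1]; first by left; apply: pow2_dvd_odd dvd1 _.
    case: (leqP (x + 1) (y + 2 ^ j1)) => [|lt_yx]; first by right.
    left; apply: (pow2_dvd_odd (m := x)) => //.
    have -> : x = y + 2 ^ j1 by lia.
    by rewrite dvdn_add.
  + by apply: witness1; lia.
  + by move=> dvd_y le_xy; apply: (witness j1) => //; lia.
Qed.

Definition f_split_spec a b :=
  f a + f b + minn a b <= f (a + b) /\
  (f (a + b) = f a + f b + minn a b <-> dyadic_balanced a b).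

Lemma f_split_spec0l b : f_split_spec 0 b.
Proof.
rewrite /f_split_spec (_ : f 0 = 0) // min0n !add0n addn0.
by split=> //; split=> // _; apply: dyadic_balanced0l.
Qed.

Lemma f_split_specC a b : f_split_spec a b -> f_split_spec b a.
Proof.
case=> le_ab eq_ab; rewrite /f_split_spec (addnC b) (addnC (f b)) minnC.
by split=> //; split=> [/eq_ab|/dyadic_balancedC/eq_ab]; [apply: dyadic_balancedC|].
Qed.

Lemma f_split_spec_double x y :
  f_split_spec x y -> f_split_spec (2 * x) (2 * y).
Proof.
rewrite /f_split_spec -mulnDr !f_double dyadic_balanced_double => -[le_xy <-].
by split; lia.
Qed.

Lemma f_split_spec_odd_even x y :
  f_split_spec x y -> f_split_spec (x + 1) y -> f_split_spec (2 * x + 1) (2 * y).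
Proof.
rewrite /f_split_spec dyadic_balanced_odd_even => -[le_xy <-] [le_x1y <-].
have -> : 2 * x + 1 + 2 * y = 2 * (x + y) + 1 by lia.
rewrite !f_double_add1 f_double (addnAC x 1 y) in le_x1y *.
by split; lia.
Qed.

Lemma f_split_spec_odd_odd x y :
  f_split_spec (x + 1) y -> f_split_spec x (y + 1) ->
  f_split_spec (2 * x + 1) (2 * y + 1).
Proof.
rewrite /f_split_spec dyadic_balanced_odd_odd => -[le_x1y _] [le_xy1 _].
rewrite (addnAC x 1 y) in le_x1y; rewrite addnA in le_xy1.
have -> : 2 * x + 1 + (2 * y + 1) = 2 * (x + y + 1) by lia.
rewrite !f_double_add1 f_double.
have [<-|neq_xy] := eqVneq x y; last by split; lia.
have -> : x + x + 1 = 2 * x + 1 by lia.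
by rewrite f_double_add1; split; lia.
Qed.

Lemma f_splitP a b : f_split_spec a b.
Proof.
have [n le_abn] := ubnP (a + b); elim: n a b le_abn => // n IH a b lt_abn.
have [->|a_gt0] := posnP a; first exact: f_split_spec0l.
have [->|b_gt0] := posnP b; first by apply: f_split_specC; apply: f_split_spec0l.
have IH' a' b' : a' + b' < a + b -> f_split_spec a' b' by move=> lt_ab; apply: IH; lia.
rewrite -(odd_double_half a) -(odd_double_half b) -!muln2 !(mulnC _ 2).
case: (odd a) (odd b) => -[] /=; rewrite ?add0n ?(addnC 1).
- by apply: f_split_spec_odd_odd; apply: IH'; lia.
- by apply: f_split_spec_odd_even; apply: IH'; lia.
- by apply: f_split_specC; apply: f_split_spec_odd_even; apply: IH'; lia.
- by apply: f_split_spec_double; apply: IH'; lia.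
Qed.

Lemma dE j n : d j.+1 n = minn (n %% 2 ^ j.+1) (2 ^ j.+1 - n %% 2 ^ j.+1).
Proof.
have := ltn_pmod n (expn_gt0 2 j.+1); rewrite /d /distn /= expnS; lia.
Qed.

Lemma minn_mod_eq m n c : 0 < m -> c <= n ->
  minn (n %% m) (m - n %% m) = c <-> 2 * c <= m /\ (m %| n - c \/ m %| n + c).
Proof.
move=> m_gt0 le_cn; have lt_rm := ltn_pmod n m_gt0.
have n_eq := divn_eq n m; set q := n %/ m in n_eq; set r := n %% m in lt_rm n_eq *.
split=> [<-|[le_cm [/dvdnP[t nc_eq]|/dvdnP[t nc_eq]]]].
- split; first by lia.
  case: (leqP r (m - r)) => [le_r|lt_r]; [left|right].
  + by rewrite (_ : n - r = q * m) ?dvdn_mull //; lia.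
  + by rewrite (_ : n + (m - r) = q.+1 * m) ?dvdn_mull //; lia.
- suff -> : r = c by lia.
  by rewrite /r (_ : n = t * m + c) ?modnMDl ?modn_small; lia.
- have [c0|c_gt0] := posnP c.
    suff -> : r = 0 by lia.
    by rewrite /r (_ : n = t * m) ?modnMl; lia.
  suff -> : r = m - c by lia.
  case: t nc_eq => [|t]; rewrite ?mulSn => nc_eq; first by lia.
  by rewrite /r (_ : n = t * m + (m - c)) ?modnMDl ?modn_small; lia.
Qed.

Lemma odd_divn p n : 0 < p -> odd (n %/ p) = (p <= n %% (2 * p)).
Proof.
move=> p_gt0; have lt_r : n %% (2 * p) < 2 * p by rewrite ltn_pmod // muln_gt0 p_gt0.
rewrite -(odd_mod _ (erefl : odd 2 = false)) modn_divl.
have [le_pr|lt_rp] := leqP p; last by rewrite divn_small.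
by rewrite (_ : _ %% _ = 1 * p + (n %% (2 * p) - p)) ?divnMDl ?divn_small //; lia.
Qed.

Lemma count_odd_div_iota p n : 0 < p ->
  2 * count (fun m => odd (m %/ p)) (iota 0 n) +
  minn (n %% (2 * p)) (2 * p - n %% (2 * p)) = n.
Proof.
move=> p_gt0; elim: n => [|n IHn]; first by rewrite mod0n min0n.
rewrite -[X in iota _ X]addn1 iotaD count_cat /= add0n odd_divn // addn0.
have lt_r : n %% (2 * p) < 2 * p by rewrite ltn_pmod // muln_gt0 p_gt0.
have n_eq := divn_eq n (2 * p); set q := n %/ _ in n_eq; set r := n %% _ in lt_r n_eq IHn *.
have [lt_r1|r_last] := ltnP r.+1 (2 * p).
  by rewrite (_ : n.+1 = q * (2 * p) + r.+1) ?modnMDl ?modn_small //; lia.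
by rewrite (_ : n.+1 = q.+1 * (2 * p)) ?modnMl; lia.
Qed.

Lemma d_le i n : d i n <= 2 ^ i.-1.
Proof. exact: leq_subr. Qed.

Lemma d_small i n : 0 < i -> n <= 2 ^ i.-1 -> d i n = n.
Proof.
case: i => // j _ /= le_n; rewrite /d /distn /= modn_small; first by lia.
by rewrite expnS; lia.
Qed.

Lemma d_lt_clog2 n i : 1 < n -> i <= clog2 n -> d i n < n.
Proof.
move=> n_gt1 le_ik; apply: leq_ltn_trans (up_log_gtn (ltnSn 1) n_gt1).
by apply: leq_trans (d_le i n) (leq_pexp2l _ _); rewrite // -!subn1 leq_sub2r.
Qed.

Lemma dyadic_balanced_dE n0 n1 : n1 <= n0 ->
  dyadic_balanced n0 n1 <-> exists j, d j.+1 (n0 + n1) = n0 - n1.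
Proof.
move=> le_10.
have dj j : d j.+1 (n0 + n1) = n0 - n1 <->
    (2 ^ j %| n0 \/ 2 ^ j %| n1) /\ n0 <= n1 + 2 ^ j /\ n1 <= n0 + 2 ^ j.
  rewrite dE minn_mod_eq ?expn_gt0 //; last by lia.
  have -> : n0 + n1 - (n0 - n1) = 2 * n1 by lia.
  have -> : n0 + n1 + (n0 - n1) = 2 * n0 by lia.
  rewrite expnS !dvdn_pmul2l //; split=> -[? ?]; split; by [tauto|lia].
by split=> -[j /dj]; exists j.
Qed.

Lemma side_trueE n i : 2 * side n i true + d (clog2 n - i).+1 n = n.
Proof.
rewrite /side dE expnS -[RHS](count_odd_div_iota n (expn_gt0 2 (clog2 n - i))).
by congr (2 * _ + _); apply: eq_count => m; rewrite /beta eqb_id.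
Qed.

Lemma side_false_true n i : side n i false + side n i true = n.
Proof.
rewrite /side -[RHS](size_iota 0 n) -(count_predC (fun m => beta (clog2 n) m i == false)).
by congr (_ + _); apply: eq_count => m /=; case: beta.
Qed.

Lemma HCBP_iff_d n n0 n1 : 1 < n -> n = n0 + n1 ->
  HCBP n n0 n1 <->
  exists i, 1 <= i <= clog2 n /\ 2 * n0 = n + d i n /\ 2 * n1 + d i n = n.
Proof.
move=> n_gt1 n_eq; split.
- case=> _ [le_10 [n1_gt0 [i [/andP[i_gt0 le_ik] sides]]]].
  have side1 := side_trueE n i; have side01 := side_false_true n i.
  exists (clog2 n - i).+1; split; first by apply/andP; split; lia.
  by case: sides; lia.
- case=> i [/andP[i_gt0 le_ik] [eq0 eq1]].
  have lt_dn := d_lt_clog2 n_gt1 le_ik.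
  set j := (clog2 n).+1 - i.
  have side01 := side_false_true n j; have side1 := side_trueE n j.
  have ji : (clog2 n - j).+1 = i by lia.
  rewrite ji in side1; split=> //; split; [lia | split; [lia|]].
  by exists j; split; [apply/andP; split; lia | left; lia].
Qed.

Lemma f_split_iff_d n n0 n1 : 1 < n -> n = n0 + n1 ->
  (f n = n1 + f n1 + f n0 /\ n1 <= n0 /\ 1 <= n1) <->
  exists i, 1 <= i <= clog2 n /\ 2 * n0 = n + d i n /\ 2 * n1 + d i n = n.
Proof.
move=> n_gt1 n_eq; have [_ eq_f] := f_splitP n0 n1; rewrite -n_eq in eq_f.
split.
- case=> f_eq [le_10 n1_gt0].
  have /(dyadic_balanced_dE le_10) [j] : dyadic_balanced n0 n1 by apply/eq_f; lia.
  rewrite -n_eq => d_eq.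
  have lt_jk : j < clog2 n.
    rewrite ltnNge; apply/negP => le_kj.
    suff : d j.+1 n = n by lia.
    exact/d_small/(leq_trans (up_logP n (ltnSn 1)))/leq_pexp2l.
  by exists j.+1; split; [apply/andP | lia].
- case=> i [/andP[i_gt0 le_ik] [eq0 eq1]].
  have lt_dn := d_lt_clog2 n_gt1 le_ik.
  have le_10 : n1 <= n0 by lia.
  have /eq_f : dyadic_balanced n0 n1.
    by apply/(dyadic_balanced_dE le_10); exists i.-1; rewrite prednK // -n_eq; lia.
  lia.
Qed.

Theorem theorem13 (n n0 n1 : nat) :
  2 <= n -> n = n0 + n1 ->
  (HCBP n n0 n1 <-> (f n = n1 + f n1 + f n0 /\ n1 <= n0 /\ 1 <= n1)) /\
  (HCBP n n0 n1 <->
     exists i, 1 <= i <= clog2 n /\ 2 * n0 = n + d i n /\ 2 * n1 + d i n = n).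
Proof.
move=> n_gt1 n_eq.
have hcbp_d := HCBP_iff_d n_gt1 n_eq; have f_split_d := f_split_iff_d n_gt1 n_eq.
by split; [apply: iff_trans hcbp_d (iff_sym f_split_d)|].
Qed.
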